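(* Let $G$ be a discrete group, $A$ an abelian group, $\alpha\colon G^3\to A$ a normalized 3-cocycle, $\mathcal{G}=\mathcal{G}(G,A,\alpha)$, $X$ a smooth manifold, and let $(u,\rho,\gamma)$ and $(u,\rho,\gamma')$ be two flat $\mathcal{G}$-bundles with the same underlying $G$-bundle $P_{u,\rho}$, defined with respect to the same surjective submersion $u\colon Y\to X$. Then there is a 1-isomorphism $(Z,v_1,v_2,h,\eta)\colon(u,\rho,\gamma)\to(u,\rho,\gamma')$ (possibly defined over a refinement $Z$ of $Y$) whose underlying $G$-bundle isomorphism is $\mathrm{id}_{P_{u,\rho}}$ if and only if $[\gamma/\gamma']=1\in\check{H}^2(X;A)$.
   Context: $A$ carries the discrete topology; $Y^{[k]}$ is the $k$-fold fiber product of $Y$ over $X$. $\rho\colon Y^{[2]}\to G$ is a locally constant Čech 1-cocycle ($\rho(y_1,y_3)=\rho(y_1,y_2)\rho(y_2,y_3)$) and $P_{u,\rho}=(Y\times G)/((y_1,\rho(y_1,y_2)g)\sim(y_2,g))$. A flat $\mathcal{G}$-bundle $(u,\rho,\gamma)$ has $\gamma\colon Y^{[3]}\to A$ locally constant with $d\gamma=\rho^*\alpha$ (Čech differential; $\rho^*\alpha(y_1,..,y_4)=\alpha(\rho(y_1,y_2),\rho(y_2,y_3),\rho(y_3,y_4))$) and $\gamma(y_1,y_2,y_2)=\gamma(y_2,y_2,y_3)=1$; then $\gamma/\gamma'$ is a Čech 2-cocycle. A 1-morphism $(u_1,\rho_1,\gamma_1)\to(u_2,\rho_2,\gamma_2)$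 is $(Z,v_1,v_2,h,\eta)$ with $v_i\colon Z\to Y_i$, $u_1v_1=u_2v_2$ a surjective submersion, $h\colon Z\to G$ and $\eta\colon Z^{[2]}\to A$ locally constant with (pullbacks along $v_i$ implicit) $\rho_2(z_1,z_2)h(z_2)=h(z_1)\rho_1(z_1,z_2)$ and $d\eta(z_1,z_2,z_3)=\frac{\gamma_1}{\gamma_2}(z_1,z_2,z_3)\cdot\frac{\alpha(\rho_2(z_1,z_2),h(z_2),\rho_1(z_2,z_3))}{\alpha(h(z_1),\rho_1(z_1,z_2),\rho_1(z_2,z_3))\alpha(\rho_2(z_1,z_2),\rho_2(z_2,z_3),h(z_3))}$; its underlying $G$-bundle isomorphism is that determined by $h$. *)

From HB Require Import structures.
From mathcomp Require Import all_boot all_order all_algebra monoid.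
From mathcomp Require Import all_classical all_reals all_analysis.
From mathcomp Require Import Rstruct Rstruct_topology.
Set Implicit Arguments. Unset Strict Implicit. Unset Printing Implicit Defensive.
Import Order.TTheory GRing.Theory Num.Theory.
Import numFieldNormedType.Exports.
Local Open Scope classical_set_scope.
Local Open Scope ring_scope.

Notation RR := Rdefinitions.R.

Fixpoint Ck (n m : nat) (k : nat) (U : set 'rV[RR]_n)
    (f : 'rV[RR]_n -> 'rV[RR]_m) : Prop :=
  match k with
  | 0 => forall x, U x -> {for x, continuous f}
  | k'.+1 => (forall x, U x -> differentiable f x) /\
             (forall v : 'rV[RR]_n, Ck k' U (fun x => 'd f x v))
  end.

Definition smooth_on (n m : nat) (U : set 'rV[RR]_n)
    (f : 'rV[RR]_n -> 'rV[RR]_m) : Prop := forall k, Ck k U f.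

Record chart (X : topologicalType) := Chart {
  ch_dim : nat;
  ch_dom : set X;
  ch_map : X -> 'rV[RR]_ch_dim;
  ch_inv : 'rV[RR]_ch_dim -> X;
  ch_dom_open : open ch_dom;
  ch_img_open : open (ch_map @` ch_dom);
  ch_invK : forall x, ch_dom x -> ch_inv (ch_map x) = x;
  ch_map_cont : {within ch_dom, continuous ch_map};
  ch_inv_cont : {within ch_map @` ch_dom, continuous ch_inv}
}.
Arguments ch_dim {X} c.
Arguments ch_dom {X} c _.
Arguments ch_map {X} c _.
Arguments ch_inv {X} c _.

Record manifold (X : topologicalType) := Manifold {
  atlas : set (chart X);
  atlas_cover : forall x : X, exists2 c, atlas c & ch_dom c x;
  atlas_compat : forall c d, atlas c -> atlas d ->
    smooth_on (ch_map c @` (ch_dom c `&` ch_dom d))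
              (fun y => ch_map d (ch_inv c y));
  man_hausdorff : hausdorff_space X;
  man_second_countable : @second_countable X
}.

Definition smooth_map (X Y : topologicalType) (MX : manifold X)
    (MY : manifold Y) (f : X -> Y) : Prop :=
  continuous f /\
  forall c d, atlas MX c -> atlas MY d ->
    smooth_on (ch_map c @` (ch_dom c `&` f @^-1` ch_dom d))
              (fun y => ch_map d (f (ch_inv c y))).

Definition submersion (X Y : topologicalType) (MX : manifold X)
    (MY : manifold Y) (f : X -> Y) : Prop :=
  forall x c d, atlas MX c -> atlas MY d -> ch_dom c x -> ch_dom d (f x) ->
    forall w : 'rV[RR]_(ch_dim d), exists v : 'rV[RR]_(ch_dim c),
      'd (fun y => ch_map d (f (ch_inv c y))) (ch_map c x) v = w.

Definition surj_submersion (X Y : topologicalType) (MX : manifold X)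
    (MY : manifold Y) (f : X -> Y) : Prop :=
  [/\ smooth_map MX MY f, (forall y, exists x, f x = y) & submersion MX MY f].

Definition fp2 (Y X : Type) (u : Y -> X) : set (Y * Y) :=
  [set p | u p.1 = u p.2].
Definition fp3 (Y X : Type) (u : Y -> X) : set (Y * Y * Y) :=
  [set p | u p.1.1 = u p.1.2 /\ u p.1.2 = u p.2].

Definition locconst_on (T : topologicalType) (V : Type) (S : set T)
    (f : T -> V) : Prop :=
  forall p, S p -> exists2 N, nbhs p N & forall q, S q -> N q -> f q = f p.

Definition normalized_3cocycle (G : groupType) (A : zmodType)
    (alpha : G -> G -> G -> A) : Prop :=
  (forall g1 g2 g3 g4 : G,
     alpha g2 g3 g4 - alpha (g1 * g2)%g g3 g4 + alpha g1 (g2 * g3)%g g4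
     - alpha g1 g2 (g3 * g4)%g + alpha g1 g2 g3 = 0) /\
  (forall g1 g2 g3 : G,
     (g1 = 1%g \/ g2 = 1%g \/ g3 = 1%g) -> alpha g1 g2 g3 = 0).

Definition cech_1cocycle (Y X : topologicalType) (G : groupType)
    (u : Y -> X) (rho : Y -> Y -> G) : Prop :=
  locconst_on (fp2 u) (fun p => rho p.1 p.2) /\
  (forall y1 y2 y3, u y1 = u y2 -> u y2 = u y3 ->
     rho y1 y3 = (rho y1 y2 * rho y2 y3)%g).

Definition flat_bundle (Y X : topologicalType) (G : groupType) (A : zmodType)
    (alpha : G -> G -> G -> A) (u : Y -> X) (rho : Y -> Y -> G)
    (gamma : Y -> Y -> Y -> A) : Prop :=
  [/\ cech_1cocycle u rho,
      locconst_on (fp3 u) (fun p => gamma p.1.1 p.1.2 p.2),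
      (forall y1 y2 y3 y4, u y1 = u y2 -> u y2 = u y3 -> u y3 = u y4 ->
         gamma y2 y3 y4 - gamma y1 y3 y4 + gamma y1 y2 y4 - gamma y1 y2 y3
         = alpha (rho y1 y2) (rho y2 y3) (rho y3 y4)),
      (forall y1 y2, u y1 = u y2 -> gamma y1 y2 y2 = 0) &
      (forall y2 y3, u y2 = u y3 -> gamma y2 y2 y3 = 0)].

(* The relation defining P_{u,rho} = (Y x G)/~ :
   (y1, rho(y1,y2) g) ~ (y2, g) for (y1,y2) in Y^[2]. *)
Definition P_rel (Y X : Type) (G : groupType) (u : Y -> X)
    (rho : Y -> Y -> G) (p q : Y * G) : Prop :=
  u p.1 = u q.1 /\ p.2 = (rho p.1 q.1 * q.2)%g.

Definition one_morphism (X Y1 Y2 Z : topologicalType) (MX : manifold X)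
    (MY1 : manifold Y1) (MY2 : manifold Y2) (MZ : manifold Z)
    (G : groupType) (A : zmodType) (alpha : G -> G -> G -> A)
    (u1 : Y1 -> X) (rho1 : Y1 -> Y1 -> G) (gamma1 : Y1 -> Y1 -> Y1 -> A)
    (u2 : Y2 -> X) (rho2 : Y2 -> Y2 -> G) (gamma2 : Y2 -> Y2 -> Y2 -> A)
    (v1 : Z -> Y1) (v2 : Z -> Y2) (h : Z -> G) (eta : Z -> Z -> A) : Prop :=
  let w := fun z => u1 (v1 z) in
  smooth_map MZ MY1 v1 /\ smooth_map MZ MY2 v2 /\
      (forall z, u1 (v1 z) = u2 (v2 z)) /\
      surj_submersion MZ MX w /\
      locconst_on setT h /\
      locconst_on (fp2 w) (fun p => eta p.1 p.2) /\
      (forall z1 z2, w z1 = w z2 ->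
         (rho2 (v2 z1) (v2 z2) * h z2 = h z1 * rho1 (v1 z1) (v1 z2))%g) /\
      (forall z1 z2 z3, w z1 = w z2 -> w z2 = w z3 ->
         eta z2 z3 - eta z1 z3 + eta z1 z2 =
           gamma1 (v1 z1) (v1 z2) (v1 z3) - gamma2 (v2 z1) (v2 z2) (v2 z3)
           + alpha (rho2 (v2 z1) (v2 z2)) (h z2) (rho1 (v1 z2) (v1 z3))
           - alpha (h z1) (rho1 (v1 z1) (v1 z2)) (rho1 (v1 z2) (v1 z3))
           - alpha (rho2 (v2 z1) (v2 z2)) (rho2 (v2 z2) (v2 z3)) (h z3)).

(* The G-bundle isomorphism P_{u,rho} -> P_{u,rho} determined by h,
   [v1 z, g] |-> [v2 z, h(z) g], is the identity. *)
Definition underlying_iso_is_id (Y X Z : Type) (G : groupType)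
    (u : Y -> X) (rho : Y -> Y -> G) (v1 v2 : Z -> Y) (h : Z -> G) : Prop :=
  forall z (g : G), P_rel u rho (v1 z, g) (v2 z, (h z * g)%g).

(* [c] = 1 in Cech H^2(X; A) for a locally constant Cech 2-cocycle c on
   Y^[3] (u : Y -> X a surjective submersion): after pulling back to some
   refinement w : W -> Y (with u o w a surjective submersion), c becomes
   the Cech coboundary of a locally constant eta : W^[2] -> A. *)
Definition cech2_trivial (X Y : topologicalType) (MX : manifold X)
    (MY : manifold Y) (A : zmodType) (u : Y -> X) (c : Y -> Y -> Y -> A)
    : Prop :=
  exists (W : topologicalType) (MW : manifold W) (w : W -> Y)
         (eta : W -> W -> A),
    [/\ smooth_map MW MY w,
        surj_submersion MW MX (fun x => u (w x)),
        locconst_on (fp2 (fun x => u (w x))) (fun p => eta p.1 p.2) &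
        (forall w1 w2 w3, u (w w1) = u (w w2) -> u (w w2) = u (w w3) ->
           eta w2 w3 - eta w1 w3 + eta w1 w2 = c (w w1) (w w2) (w w3))].

From HB Require Import structures.
From mathcomp Require Import all_boot all_order all_algebra monoid.
From mathcomp Require Import all_classical all_reals all_analysis.
From mathcomp Require Import Rstruct Rstruct_topology.

(* If the identity of P_{u,rho} underlies (Z, v1, v2, h, eta), then h is forced
   to be rho(v2, v1), and the prism operator of the homotopy v2 ~ v1 (built
   from gamma') corrects eta into a cochain on Z^[2] whose Cech coboundary is
   (gamma - gamma') pulled back along v1: the alpha-terms in the coboundary of
   eta are exactly cancelled, because d gamma' = rho^* alpha.  Conversely, a
   trivialisation eta of [gamma - gamma'] over w : W -> Y gives the 1-morphism
   (W, w, w, 1, eta), the alpha-terms vanishing as alpha is normalized. *)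

Set Implicit Arguments.
Unset Strict Implicit.
Unset Printing Implicit Defensive.
Import GRing.Theory.
Local Open Scope classical_set_scope.
Local Open Scope ring_scope.

(* Proves an identity of Z-linear combinations in a zmodType: in the flattened
   difference of both sides, each [- t] and then [t] is moved to the end, where
   [subrK] cancels them. *)
Ltac zmod_identity :=
  apply/eqP; rewrite -subr_eq0; apply/eqP;
  rewrite -[LHS]add0r ?opprD ?opprK ?addrA;
  repeat match goal with
  | |- context [- ?t] => rewrite ?(addrAC _ (- t)) ?(addrAC _ t) subrK
  end;
  reflexivity.

Section LocallyConstant.
Variable T : topologicalType.

Lemma locconst_comp (S : topologicalType) (V : Type) (ST : set T) (SS : set S)
    (f : S -> V) (g : T -> S) :
  locconst_on SS f -> (forall p, ST p -> SS (g p)) -> continuous g ->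
  locconst_on ST (fun p => f (g p)).
Proof.
move=> lf STS cg p STp; have [N Np fN] := lf _ (STS _ STp).
exists (g @^-1` N); first exact: cg.
by move=> q STq Nq; rewrite fN //; apply: STS.
Qed.

Lemma locconst_map2 (V W U : Type) (op : V -> W -> U) (S : set T)
    (f : T -> V) (g : T -> W) :
  locconst_on S f -> locconst_on S g -> locconst_on S (fun p => op (f p) (g p)).
Proof.
move=> lf lg p Sp; have [N Np fN] := lf _ Sp; have [M Mp gM] := lg _ Sp.
by exists (N `&` M) => [|q Sq [Nq Mq]]; [exact: filterI | rewrite fN ?gM].
Qed.

Lemma locconst_cst (V : Type) (S : set T) (v : V) : locconst_on S (fun=> v).
Proof. by move=> p _; exists setT => //; exact: filterT. Qed.

End LocallyConstant.

Lemma continuous_pair (T U V : topologicalType) (f : T -> U) (g : T -> V) :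
  continuous f -> continuous g -> continuous (fun t => (f t, g t)).
Proof. by move=> cf cg t; apply: cvg_pair; [exact: cf | exact: cg]. Qed.

Lemma continuous_comp_fst (T T' U : topologicalType) (f : T -> U) :
  continuous f -> continuous (fun p : T * T' => f p.1).
Proof. by move=> cf p; apply: continuous_comp; [exact: cvg_fst | exact: cf]. Qed.

Lemma continuous_comp_snd (T T' U : topologicalType) (f : T' -> U) :
  continuous f -> continuous (fun p : T * T' => f p.2).
Proof. by move=> cf p; apply: continuous_comp; [exact: cvg_snd | exact: cf]. Qed.

Section CechCochains.
Variable A : zmodType.

Definition cech_d1 (T : Type) (eta : T -> T -> A) (t1 t2 t3 : T) : A :=
  eta t2 t3 - eta t1 t3 + eta t1 t2.

Definition cech_d2 (T : Type) (c : T -> T -> T -> A) (t1 t2 t3 t4 : T) : A :=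
  c t2 t3 t4 - c t1 t3 t4 + c t1 t2 t4 - c t1 t2 t3.

Lemma cech_d1D (T : Type) (f g : T -> T -> A) t1 t2 t3 :
  cech_d1 (fun s t => f s t + g s t) t1 t2 t3 =
  cech_d1 f t1 t2 t3 + cech_d1 g t1 t2 t3.
Proof. by rewrite /cech_d1; zmod_identity. Qed.

Variables (Z Y : Type) (a b : Z -> Y).

(* The prism (chain homotopy) operator between the pullbacks along [b] and [a]. *)
Definition prism (c : Y -> Y -> Y -> A) (z1 z2 : Z) : A :=
  c (b z1) (b z2) (a z2) - c (b z1) (a z1) (a z2).

Lemma cech_d1_prism (c : Y -> Y -> Y -> A) z1 z2 z3 :
  cech_d1 (prism c) z1 z2 z3 =
    c (b z1) (b z2) (b z3) - c (a z1) (a z2) (a z3)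
    + cech_d2 c (b z1) (a z1) (a z2) (a z3)
    - cech_d2 c (b z1) (b z2) (a z2) (a z3)
    + cech_d2 c (b z1) (b z2) (b z3) (a z3).
Proof. by rewrite /cech_d1 /cech_d2 /prism; zmod_identity. Qed.

End CechCochains.

Section FlatBundles.
Variables (G : groupType) (A : zmodType) (alpha : G -> G -> G -> A).
Variables (X Y : topologicalType) (u : Y -> X) (rho : Y -> Y -> G).
Hypothesis hrho : cech_1cocycle u rho.

Lemma cech_1cocycle_diag y : rho y y = 1%g.
Proof.
have := hrho.2 y y y erefl erefl.
by rewrite -{1}(mulg1 (rho y y)) => /mulgI.
Qed.

Lemma underlying_iso_is_idE (Z : Type) (v1 v2 : Z -> Y) (h : Z -> G) :
  (forall z, u (v1 z) = u (v2 z)) ->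
  underlying_iso_is_id u rho v1 v2 h <-> forall z, h z = rho (v2 z) (v1 z).
Proof.
move=> uv; have rhoV z : (rho (v1 z) (v2 z) * rho (v2 z) (v1 z))%g = 1%g.
  by rewrite -hrho.2 ?cech_1cocycle_diag.
split=> [hid z | hE z g].
- have [_ /=] := hid z 1%g; rewrite mulg1 => rho_h.
  by apply: (@mulgI _ (rho (v1 z) (v2 z))); rewrite -rho_h rhoV.
- by split=> //=; rewrite hE mulgA rhoV mul1g.
Qed.

Lemma locconst_prism (Z : topologicalType) (c : Y -> Y -> Y -> A)
    (a b : Z -> Y) :
  locconst_on (fp3 u) (fun p => c p.1.1 p.1.2 p.2) ->
  continuous a -> continuous b -> (forall z, u (a z) = u (b z)) ->
  locconst_on (fp2 (fun z => u (a z))) (fun p => prism a b c p.1 p.2).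
Proof.
move=> lc ca cb uab; rewrite /prism.
apply: (locconst_map2 (fun x y => x - y)).
- apply: (locconst_comp (g := fun p : Z * Z => (b p.1, b p.2, a p.2)) lc).
    by move=> p; rewrite /fp2 /fp3 /= -!uab.
  exact: continuous_pair (continuous_pair (continuous_comp_fst (T' := Z) cb)
    (continuous_comp_snd (T := Z) cb)) (continuous_comp_snd (T := Z) ca).
- apply: (locconst_comp (g := fun p : Z * Z => (b p.1, a p.1, a p.2)) lc).
    by move=> p; rewrite /fp2 /fp3 /= -!uab.
  exact: continuous_pair (continuous_pair (continuous_comp_fst (T' := Z) cb)
    (continuous_comp_fst (T' := Z) ca)) (continuous_comp_snd (T := Z) ca).
Qed.

Variables (MX : manifold X) (MY : manifold Y) (gamma gamma' : Y -> Y -> Y -> A).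

Lemma cech2_trivial_of_one_morphism_id (Z : topologicalType) (MZ : manifold Z)
    (v1 v2 : Z -> Y) (h : Z -> G) (eta : Z -> Z -> A) :
  flat_bundle alpha u rho gamma' ->
  one_morphism MX MY MY MZ alpha u rho gamma u rho gamma' v1 v2 h eta ->
  underlying_iso_is_id u rho v1 v2 h ->
  cech2_trivial MX MY u (fun y1 y2 y3 => gamma y1 y2 y3 - gamma' y1 y2 y3).
Proof.
case=> _ lgamma' dgamma' _ _.
move=> [sv1 [sv2 [uv [sw [_ [leta [_ deta]]]]]]] /(underlying_iso_is_idE h uv) hE.
exists Z, MZ, v1, (fun z1 z2 => eta z1 z2 + prism v1 v2 gamma' z1 z2); split=> //.
  apply: (locconst_map2 +%R) leta _.
  exact: locconst_prism lgamma' sv1.1 sv2.1 uv.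
move=> z1 z2 z3 e12 e23.
have {}deta : cech_d1 eta z1 z2 z3 = _ := deta z1 z2 z3 e12 e23.
rewrite !hE in deta.
have u1 := uv z1; have u2 := uv z2; have u3 := uv z3.
have {}dgamma' y1 y2 y3 y4 : u y1 = u y2 -> u y2 = u y3 -> u y3 = u y4 ->
    cech_d2 gamma' y1 y2 y3 y4 = alpha (rho y1 y2) (rho y2 y3) (rho y3 y4).
  exact: dgamma'.
rewrite -/(cech_d1 (fun s t => eta s t + prism v1 v2 gamma' s t) z1 z2 z3).
rewrite cech_d1D deta cech_d1_prism.
by rewrite !dgamma' //=; first zmod_identity; congruence.
Qed.

Lemma one_morphism_id_of_cech2_trivial :
  normalized_3cocycle alpha ->
  cech2_trivial MX MY u (fun y1 y2 y3 => gamma y1 y2 y3 - gamma' y1 y2 y3) ->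
  exists (Z : topologicalType) (MZ : manifold Z) (v1 v2 : Z -> Y)
         (h : Z -> G) (eta : Z -> Z -> A),
    one_morphism MX MY MY MZ alpha u rho gamma u rho gamma' v1 v2 h eta /\
    underlying_iso_is_id u rho v1 v2 h.
Proof.
move=> [_ alpha1] [W [MW [w [eta [sw sws leta deta]]]]].
exists W, MW, w, w, (fun=> 1%g), eta; split.
  do 4?split=> //; split; first exact: locconst_cst.
  split=> //; split=> [w1 w2 _|w1 w2 w3 e12 e23]; first by rewrite mulg1 mul1g.
  rewrite deta // !alpha1; [|by right; right|by left|by right; left].
  by rewrite !subr0 addr0.
by apply/underlying_iso_is_idE => // z; rewrite cech_1cocycle_diag.
Qed.

End FlatBundles.

Theorem mainTheorem9 (G : groupType) (A : zmodType)
    (alpha : G -> G -> G -> A) (halpha : normalized_3cocycle alpha)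
    (X Y : topologicalType) (MX : manifold X) (MY : manifold Y)
    (u : Y -> X) (hu : surj_submersion MY MX u)
    (rho : Y -> Y -> G) (gamma gamma' : Y -> Y -> Y -> A)
    (hgamma : flat_bundle alpha u rho gamma)
    (hgamma' : flat_bundle alpha u rho gamma') :
  (exists (Z : topologicalType) (MZ : manifold Z) (v1 v2 : Z -> Y)
          (h : Z -> G) (eta : Z -> Z -> A),
     one_morphism MX MY MY MZ alpha u rho gamma u rho gamma' v1 v2 h eta /\
     underlying_iso_is_id u rho v1 v2 h)
  <->
  cech2_trivial MX MY u (fun y1 y2 y3 => gamma y1 y2 y3 - gamma' y1 y2 y3).
Proof.
have [hrho _ _ _ _] := hgamma'.
split=> [[Z [MZ [v1 [v2 [h [eta [hmor hid]]]]]]] | htriv].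
  exact (cech2_trivial_of_one_morphism_id hrho hgamma' hmor hid).
exact (one_morphism_id_of_cech2_trivial hrho halpha htriv).
Qed.
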